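(* Let $n,r\ge1$, $\lambda\in\Lambda_\vartriangle(n,r)$ and $d\in\mathscr D^\vartriangle_\lambda$. Let $$Y=\{(s,t)\in\mathbb Z^2\mid 1\le d^{-1}(s)\le r,\ s<t,\ s,t\in R^\lambda_k\text{ for some }k\in\mathbb Z\},$$ $$Z=\{(s,t)\in\mathbb Z^2\mid 1\le s\le r,\ s<t,\ s,t\in R^\lambda_k\text{ for some }1\le k\le n\}.$$ Then $|Y|=|Z|=\ell(w_{0,\lambda})$, where $w_{0,\lambda}$ is the longest element of $\mathfrak S_\lambda$.
   Context: The affine symmetric group $\mathfrak S_{\vartriangle,r}$ is the group (under composition) of bijections $w:\mathbb Z\to\mathbb Z$ with $w(i+r)=w(i)+r$. It contains $s_i$ ($1\le i\le r$): $s_i(j)=j$ if $j\not\equiv i,i+1\pmod r$, $s_i(j)=j-1$ if $j\equiv i+1$, $s_i(j)=j+1$ if $j\equiv i$; and $\rho:j\mapsto j+1$. The $s_i$ generate a Coxeter group $W$ with length $\ell$; every element is uniquely $\rho^aw'$ ($w'\in W$) and $\ell(\rho^aw')=\ell(w')$. $\Lambda_\vartriangle(n,r)$ is the set of $\lambda=(\lambda_i)_{i\in\mathbb Z}$ with $\lambda_i\in\mathbb N$, $\lambda_{i+n}=\lambda_i$, $\lambda_1+\dots+\lambda_n=r$. For $1\le i\le n$, $k\in\mathbb Z$ put $\lambda_{k,i-1}=kr+\sum_{t=1}^{i-1}\lambda_t$ and $R^\lambda_{i+kn}=\{\lambda_{k,i-1}+1,\dots,\lambda_{k,i-1}+\lambda_i\}$.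 $\mathfrak S_\lambda$ is the Young subgroup $\mathfrak S_{(\lambda_1,\dots,\lambda_n)}$ of $\mathfrak S_r$ (periodically extended), and $\mathscr D^\vartriangle_\lambda=\{d\mid \ell(wd)=\ell(w)+\ell(d)\ \forall w\in\mathfrak S_\lambda\}$. *)

From Stdlib Require Import ZArith List Lia.
Import ListNotations.
Open Scope Z_scope.

Definition is_affine_perm (r : Z) (w : Z -> Z) : Prop :=
  (exists g : Z -> Z, (forall x, g (w x) = x) /\ (forall x, w (g x) = x)) /\
  (forall i, w (i + r) = w i + r).

Definition s_gen (r i : Z) (j : Z) : Z :=
  if Z.eqb (j mod r) (i mod r) then j + 1
  else if Z.eqb (j mod r) ((i + 1) mod r) then j - 1
  else j.

Definition word_eval (r : Z) (l : list Z) : Z -> Z :=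
  fold_right (fun i f => fun j => s_gen r i (f j)) (fun j => j) l.

(* w = rho^a o s_{i1} o ... o s_{ik} with k letters, 1 <= i_t <= r, rho : j |-> j+1 *)
Definition expressible (r : Z) (w : Z -> Z) (k : nat) : Prop :=
  exists (a : Z) (l : list Z),
    Forall (fun i => 1 <= i <= r) l /\ length l = k /\
    forall j, w j = word_eval r l j + a.

(* Coxeter length: ℓ(rho^a w') = ℓ(w'), the minimal word length. *)
Definition aff_length (r : Z) (w : Z -> Z) (k : nat) : Prop :=
  expressible r w k /\ forall k', expressible r w k' -> (k <= k')%nat.

Definition psum (lam : Z -> nat) (m : Z) : Z :=
  fold_right Z.add 0
    (map (fun t => Z.of_nat (lam (Z.of_nat t))) (seq 1 (Z.to_nat m))).

Definition in_Lambda (n r : Z) (lam : Z -> nat) : Prop :=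
  (forall i, lam (i + n) = lam i) /\ psum lam n = r.

(* λ_{k,i-1} = k r + sum_{t=1}^{i-1} λ_t *)
Definition lam_ki (r : Z) (lam : Z -> nat) (k i : Z) : Z :=
  k * r + psum lam (i - 1).

Definition in_R (n r : Z) (lam : Z -> nat) (m x : Z) : Prop :=
  exists k i, 1 <= i <= n /\ m = i + k * n /\
    lam_ki r lam k i < x <= lam_ki r lam k i + Z.of_nat (lam i).

(* Young subgroup S_λ of S_r (periodically extended) *)
Definition in_young (n r : Z) (lam : Z -> nat) (w : Z -> Z) : Prop :=
  is_affine_perm r w /\
  (forall j, 1 <= j <= r -> 1 <= w j <= r) /\
  (forall i x, 1 <= i <= n -> in_R n r lam i x -> in_R n r lam i (w x)).

Definition in_D (n r : Z) (lam : Z -> nat) (d : Z -> Z) : Prop :=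
  is_affine_perm r d /\
  forall w, in_young n r lam w ->
    forall a b, aff_length r w a -> aff_length r d b ->
      aff_length r (fun j => w (d j)) (a + b).

Definition is_longest (n r : Z) (lam : Z -> nat) (w0 : Z -> Z) : Prop :=
  in_young n r lam w0 /\
  forall w a b, in_young n r lam w -> aff_length r w a -> aff_length r w0 b ->
    (a <= b)%nat.

Definition has_card (P : Z * Z -> Prop) (m : nat) : Prop :=
  exists l : list (Z * Z), NoDup l /\ length l = m /\ forall x, In x l <-> P x.

(* Y (1 <= d^{-1}(s) <= r written as: s = d j for some 1 <= j <= r) *)
Definition Yset (n r : Z) (lam : Z -> nat) (d : Z -> Z) (p : Z * Z) : Prop :=
  let (s, t) := p in
  (exists j, 1 <= j <= r /\ d j = s) /\ s < t /\
  exists m, in_R n r lam m s /\ in_R n r lam m t.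

Definition Zset (n r : Z) (lam : Z -> nat) (p : Z * Z) : Prop :=
  let (s, t) := p in
  1 <= s <= r /\ s < t /\
  exists m, 1 <= m <= n /\ in_R n r lam m s /\ in_R n r lam m t.

From Stdlib Require Import ZArith List Lia.
Import ListNotations.
Open Scope Z_scope.

(* Every affine permutation w satisfies l(w) >= sum_{1 <= a < b <= r} |floor((w b - w a) / r)|
   (one half of Shi's length formula): the sum is invariant under rho, and left multiplication
   by a generator s_k changes at most one of its terms, by at most one, namely that of the pair
   whose images have residues k and k + 1.  For w in the Young subgroup S_lambda the sum is the
   number of inversions among 1 <= a < b <= r, and each inversion lies inside a block of lambda.
   A discrete intermediate value argument yields an adjacent pair v, v + 1 in a block that is
   inverted (resp. not inverted) by w^-1; multiplying by s_v shows that w is a product of that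
   many generators, and that starting from the identity one reaches an element inverting every
   pair inside a block.  So the longest elements have length N = |Z|.  Finally Y is in bijection
   with Z by translating (s, t) by the multiple of r that moves d^-1(s) into [1, r], the blocks
   R^lambda_k being r-periodic. *)

Fixpoint zseq (k : nat) (a : Z) : list Z :=
  match k with O => [] | S k' => a :: zseq k' (a + 1) end.

Lemma in_zseq k a x : In x (zseq k a) <-> a <= x < a + Z.of_nat k.
Proof. revert a; induction k as [|k IH]; intros a; simpl; [lia|]. rewrite IH. lia. Qed.

Lemma NoDup_zseq k a : NoDup (zseq k a).
Proof.
  revert a; induction k as [|k IH]; intros a; simpl; constructor; auto.
  rewrite in_zseq. lia.
Qed.

Lemma NoDup_list_prod {A B : Type} (l : list A) (l' : list B) :
  NoDup l -> NoDup l' -> NoDup (list_prod l l').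
Proof.
  intros Hl Hl'. induction Hl as [|a l Ha Hl IH]; simpl; [constructor|].
  apply NoDup_app; auto.
  - apply NoDup_map_NoDup_ForallPairs; auto. intros x y _ _ E. now injection E.
  - intros [x y] Hxy Hin. apply in_map_iff in Hxy as [b [E _]]. injection E as <- _.
    apply in_prod_iff in Hin. tauto.
Qed.

Definition pairs (r : Z) : list (Z * Z) :=
  let I := zseq (Z.to_nat r) 1 in filter (fun p => fst p <? snd p) (list_prod I I).

Lemma in_pairs r a b : In (a, b) (pairs r) <-> 1 <= a /\ a < b <= r.
Proof. unfold pairs. rewrite filter_In, in_prod_iff, !in_zseq, Z.ltb_lt. cbn [fst snd]. lia. Qed.

Lemma NoDup_pairs r : NoDup (pairs r).
Proof. apply NoDup_filter, NoDup_list_prod; apply NoDup_zseq. Qed.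

Definition sumZ (l : list Z) : Z := fold_right Z.add 0 l.

Section Sums.
Context {A : Type}.
Implicit Types (l : list A) (F G : A -> Z).

Lemma sumZ_map_ext l F G :
  (forall x, In x l -> F x = G x) -> sumZ (map F l) = sumZ (map G l).
Proof. intros H. f_equal. now apply map_ext_in. Qed.

Lemma sumZ_map_update l F G x0 :
  NoDup l -> In x0 l -> (forall x, In x l -> x <> x0 -> G x = F x) ->
  sumZ (map G l) = sumZ (map F l) + (G x0 - F x0).
Proof.
  induction l as [|a l IH]; simpl; intros Hnd Hin H; [contradiction|].
  inversion Hnd as [|? ? Ha Hl]; subst.
  destruct Hin as [<-|Hin].
  - rewrite (sumZ_map_ext l G F); [lia|].
    intros x Hx. apply H; [now right|]. intros ->. contradiction.
  - assert (a <> x0) by (intros ->; contradiction).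
    rewrite (H a (or_introl eq_refl)), IH; auto. lia.
Qed.

Lemma sumZ_map_le_succ l F G :
  NoDup l -> (forall x, In x l -> G x <= F x + 1) ->
  (forall x y, In x l -> In y l -> G x <> F x -> G y <> F y -> x = y) ->
  sumZ (map G l) <= sumZ (map F l) + 1.
Proof.
  induction l as [|a l IH]; simpl; intros Hnd Hle Huniq; [lia|].
  inversion Hnd as [|? ? Ha Hl]; subst.
  destruct (Z.eq_dec (G a) (F a)) as [Heq|Hne].
  - enough (sumZ (map G l) <= sumZ (map F l) + 1) by lia.
    apply IH; auto.
  - rewrite (sumZ_map_ext l G F); [specialize (Hle a (or_introl eq_refl)); lia|].
    intros x Hx. destruct (Z.eq_dec (G x) (F x)) as [|Hx']; auto.
    assert (x = a) as -> by (apply Huniq; auto; now left). contradiction.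
Qed.

Lemma sumZ_indicator l (h : A -> bool) :
  sumZ (map (fun x => if h x then 1 else 0) l) = Z.of_nat (length (filter h l)).
Proof.
  induction l as [|a l IH]; [reflexivity|].
  cbn [map filter]. change (sumZ (?x :: ?m)) with (x + sumZ m).
  destruct (h a); cbn [length]; lia.
Qed.

Lemma length_filter_mono l (f h : A -> bool) :
  (forall x, In x l -> f x = true -> h x = true) ->
  (length (filter f l) <= length (filter h l))%nat.
Proof.
  induction l as [|a l IH]; simpl; intros H; auto.
  specialize (IH (fun x Hx => H x (or_intror Hx))).
  destruct (f a) eqn:Ef; [rewrite (H a (or_introl eq_refl) Ef); simpl; lia|].
  destruct (h a); simpl; lia.
Qed.

End Sums.

Lemma has_card_map (P Q : Z * Z -> Prop) (f : Z * Z -> Z * Z) k :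
  has_card P k -> (forall p p', P p -> P p' -> f p = f p' -> p = p') ->
  (forall q, Q q <-> exists p, P p /\ f p = q) -> has_card Q k.
Proof.
  intros [l [Hnd [Hlen Hl]]] Hinj HQ. exists (map f l). split; [|split].
  - apply NoDup_map_NoDup_ForallPairs; auto. intros p p' Hp Hp'. apply Hinj; now apply Hl.
  - now rewrite length_map.
  - intros q. rewrite in_map_iff, HQ.
    split; intros [p [H1 H2]]; exists p; split; auto; now apply Hl.
Qed.

Ltac case_Z_tests :=
  repeat match goal with
  | |- context [?a =? ?b] => destruct (Z.eqb_spec a b)
  | |- context [?a <? ?b] => destruct (Z.ltb_spec a b)
  end.

Lemma shift_equivariant r (f : Z -> Z) :
  (forall x, f (x + r) = f x + r) -> forall q x, f (x + q * r) = f x + q * r.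
Proof.
  intros Hf.
  assert (Hnat : forall (k : nat) x, f (x + Z.of_nat k * r) = f x + Z.of_nat k * r).
  { induction k as [|k IH]; intros x; [simpl; now rewrite !Z.add_0_r|].
    replace (x + Z.of_nat (S k) * r) with (x + Z.of_nat k * r + r) by lia.
    rewrite Hf, IH. lia. }
  intros q x. destruct (Z_le_gt_dec 0 q).
  - rewrite <- (Z2Nat.id q) by lia. apply Hnat.
  - specialize (Hnat (Z.to_nat (- q)) (x + q * r)). rewrite Z2Nat.id in Hnat by lia.
    replace (x + q * r + - q * r) with x in Hnat by lia. lia.
Qed.

Lemma mod_eq_diff r x y : r <> 0 -> x mod r = y mod r -> y = x + (y / r - x / r) * r.
Proof. intros Hr E. pose proof (Z.div_mod x r Hr). pose proof (Z.div_mod y r Hr). lia. Qed.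

Lemma mod_inj_range r a b : 1 <= a <= r -> 1 <= b <= r -> a mod r = b mod r -> a = b.
Proof.
  intros Ha Hb E. apply mod_eq_diff in E; [|lia].
  set (q := b / r - a / r) in E. assert (q = 0) by nia. lia.
Qed.

Lemma mod_inj_of_equivariant r (f g : Z -> Z) :
  r <> 0 -> (forall x, g (f x) = x) -> (forall q x, f (x + q * r) = f x + q * r) ->
  forall x y, f x mod r = f y mod r -> x mod r = y mod r.
Proof.
  intros Hr Hgf Hf x y E. apply mod_eq_diff in E; auto.
  rewrite <- Hf in E. apply (f_equal g) in E. rewrite !Hgf in E.
  now rewrite E, Z.mod_add.
Qed.

Lemma succ_mod_cases r k : 2 <= r ->
  (k + 1) mod r = k mod r + 1 \/ ((k + 1) mod r = 0 /\ k mod r = r - 1).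
Proof.
  intros Hr. pose proof (Z.mod_pos_bound k r ltac:(lia)).
  rewrite Z.add_mod, (Z.mod_small 1) by lia.
  destruct (Z.eq_dec (k mod r + 1) r) as [E|E].
  - rewrite E, Z.mod_same; lia.
  - rewrite Z.mod_small; lia.
Qed.

Lemma reduce_range r j : 0 < r -> j = ((j - 1) mod r + 1) + ((j - 1) / r) * r /\ 1 <= (j - 1) mod r + 1 <= r.
Proof.
  intros Hr. pose proof (Z.div_mod (j - 1) r ltac:(lia)). pose proof (Z.mod_pos_bound (j - 1) r Hr). lia.
Qed.

Lemma small_quotient r t : 0 < r -> -2 * r <= t < 2 * r ->
  t / r = if t <? - r then -2 else if t <? 0 then -1 else if t <? r then 0 else 1.
Proof.
  intros Hr Ht.
  destruct (Z.ltb_spec t (- r)); [|destruct (Z.ltb_spec t 0); [|destruct (Z.ltb_spec t r)]];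
    symmetry.
  - apply Z.div_unique with (r := t + 2 * r); lia.
  - apply Z.div_unique with (r := t + r); lia.
  - apply Z.div_unique with (r := t); lia.
  - apply Z.div_unique with (r := t - r); lia.
Qed.

Lemma quotient_diff r x y e : 0 < r ->
  (y - x + e) / r = y / r - x / r + (y mod r - x mod r + e) / r.
Proof.
  intros Hr. rewrite <- Z.div_add_l by lia. f_equal.
  pose proof (Z.div_mod x r ltac:(lia)). pose proof (Z.div_mod y r ltac:(lia)). lia.
Qed.

Lemma s_gen_offset r k z : s_gen r k z =
  z + (if z mod r =? k mod r then 1 else if z mod r =? (k + 1) mod r then -1 else 0).
Proof. unfold s_gen. destruct (_ =? _); [lia|]. destruct (_ =? _); lia. Qed.

Lemma s_gen_add_mul r k q x : 0 < r -> s_gen r k (x + q * r) = s_gen r k x + q * r.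
Proof.
  intros Hr. unfold s_gen. rewrite Z.mod_add by lia.
  destruct (_ =? _); [lia|]. destruct (_ =? _); lia.
Qed.

Lemma s_gen_involutive r k x : 2 <= r -> s_gen r k (s_gen r k x) = x.
Proof.
  intros Hr.
  assert (Hcongr : forall a b c, a mod r = b mod r -> (a + c) mod r = (b + c) mod r).
  { intros a b c E. now rewrite Z.add_mod, E, <- Z.add_mod by lia. }
  assert (Hne : (k + 1) mod r <> k mod r) by (destruct (succ_mod_cases r k); lia).
  unfold s_gen at 2.
  destruct (Z.eqb_spec (x mod r) (k mod r)) as [E|E];
    [|destruct (Z.eqb_spec (x mod r) ((k + 1) mod r)) as [E'|E']]; unfold s_gen.
  - apply (Hcongr _ _ 1) in E. apply Z.eqb_neq in Hne. rewrite E, Hne, Z.eqb_refl. lia.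
  - apply (Hcongr _ _ (-1)) in E'. replace (k + 1 + -1) with k in E' by lia.
    replace (x + -1) with (x - 1) in E' by lia. rewrite E', Z.eqb_refl. lia.
  - apply Z.eqb_neq in E, E'. now rewrite E, E'.
Qed.

Lemma s_gen_mod_inj r k x y : 2 <= r ->
  s_gen r k x mod r = s_gen r k y mod r -> x mod r = y mod r.
Proof.
  intros Hr. apply (mod_inj_of_equivariant r (s_gen r k) (s_gen r k)); [lia| |].
  - intros z. now apply s_gen_involutive.
  - intros q z. apply s_gen_add_mul. lia.
Qed.

Lemma word_eval_mod_inj r l x y : 2 <= r ->
  word_eval r l x mod r = word_eval r l y mod r -> x mod r = y mod r.
Proof.
  intros Hr. induction l as [|i l IH]; simpl; auto.
  intros E. apply IH. now apply (s_gen_mod_inj r i).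
Qed.

Lemma s_gen_on_range r v x : 2 <= r -> 1 <= v < r -> 1 <= x <= r ->
  s_gen r v x = if x =? v then v + 1 else if x =? v + 1 then v else x.
Proof.
  intros Hr Hv Hx.
  assert (Hsmall : forall y, 1 <= y <= r -> y mod r = if y =? r then 0 else y).
  { intros y Hy. destruct (Z.eqb_spec y r) as [->|]; [apply Z.mod_same | apply Z.mod_small]; lia. }
  unfold s_gen. rewrite (Hsmall x), (Hsmall v), (Hsmall (v + 1)) by lia.
  destruct (Z.eqb_spec x r), (Z.eqb_spec v r), (Z.eqb_spec (v + 1) r);
  case_Z_tests; lia.
Qed.

Lemma s_gen_ltb r v x y : 2 <= r -> 1 <= v < r -> 1 <= x <= r -> 1 <= y <= r ->
  ~ (x = v /\ y = v + 1) -> ~ (x = v + 1 /\ y = v) ->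
  (s_gen r v y <? s_gen r v x) = (y <? x).
Proof.
  intros Hr Hv Hx Hy H1 H2. rewrite !s_gen_on_range by lia.
  case_Z_tests; first [reflexivity | exfalso; lia].
Qed.

(** * A lower bound for the length *)

Definition winding (r x y : Z) : Z := Z.abs ((y - x) / r).

Definition swapped (r k x y : Z) : Prop :=
  (x mod r = k mod r /\ y mod r = (k + 1) mod r) \/
  (x mod r = (k + 1) mod r /\ y mod r = k mod r).

Lemma winding_s_gen r k x y : 2 <= r ->
  winding r (s_gen r k x) (s_gen r k y) <= winding r x y + 1 /\
  (winding r (s_gen r k x) (s_gen r k y) <> winding r x y -> swapped r k x y).
Proof.
  intros Hr. unfold winding, swapped. rewrite !s_gen_offset.
  rewrite <- (Z.add_0_r (y - x)).
  match goal with |- context [(y + ?oy - (x + ?ox)) / r] =>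
    replace (y + oy - (x + ox)) with (y - x + (oy - ox)) by ring end.
  do 2 rewrite (quotient_diff r x y) by lia.
  pose proof (Z.mod_pos_bound x r ltac:(lia)). pose proof (Z.mod_pos_bound y r ltac:(lia)).
  pose proof (Z.mod_pos_bound k r ltac:(lia)). pose proof (Z.mod_pos_bound (k + 1) r ltac:(lia)).
  pose proof (succ_mod_cases r k Hr).
  set (qx := x / r). set (qy := y / r).
  set (rx := x mod r) in *. set (ry := y mod r) in *.
  set (c := k mod r) in *. set (c' := (k + 1) mod r) in *.
  case_Z_tests; rewrite !small_quotient by lia; case_Z_tests; lia.
Qed.

Definition affinv (r : Z) (f : Z -> Z) : Z :=
  sumZ (map (fun p => winding r (f (fst p)) (f (snd p))) (pairs r)).

Lemma affinv_translate r f g a : (forall x, g x = f x + a) -> affinv r g = affinv r f.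
Proof.
  intros H. apply sumZ_map_ext. intros p _. unfold winding. rewrite !H. do 2 f_equal. lia.
Qed.

Lemma affinv_id r : affinv r (fun x => x) = 0.
Proof.
  transitivity (sumZ (map (fun _ => 0) (pairs r))).
  - apply sumZ_map_ext. intros [a b] Hab. apply in_pairs in Hab.
    unfold winding. simpl. rewrite Z.div_small by lia. reflexivity.
  - induction (pairs r); simpl; auto.
Qed.

Lemma affinv_s_gen r k f : 2 <= r ->
  (forall a b, 1 <= a <= r -> 1 <= b <= r -> f a mod r = f b mod r -> a = b) ->
  affinv r (fun x => s_gen r k (f x)) <= affinv r f + 1.
Proof.
  intros Hr Hinj. apply sumZ_map_le_succ; [apply NoDup_pairs| |].
  - intros p _. apply winding_s_gen, Hr.
  - intros [a b] [a' b'] Hab Hab' Hch Hch'. simpl in *.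
    apply in_pairs in Hab, Hab'.
    apply (winding_s_gen r k) in Hch, Hch'; auto. unfold swapped in Hch, Hch'.
    destruct Hch as [[Ha Hb]|[Ha Hb]], Hch' as [[Ha' Hb']|[Ha' Hb']];
      try (f_equal; apply Hinj; lia).
    all: assert (a = b') by (apply Hinj; lia); assert (b = a') by (apply Hinj; lia); lia.
Qed.

Lemma affinv_word r l : affinv r (word_eval r l) <= Z.of_nat (length l).
Proof.
  destruct (Z_le_gt_dec r 1) as [Hr|Hr].
  - unfold affinv. destruct (pairs r) as [|[a b] ps] eqn:E; simpl; [lia|].
    assert (Hab : In (a, b) (pairs r)) by (rewrite E; now left).
    apply in_pairs in Hab. lia.
  - induction l as [|i l IH].
    + simpl. rewrite affinv_id. lia.
    + change (word_eval r (i :: l)) with (fun j => s_gen r i (word_eval r l j)).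
      enough (affinv r (fun j => s_gen r i (word_eval r l j)) <= affinv r (word_eval r l) + 1)
        by (cbn [length]; lia).
      apply affinv_s_gen; [lia|]. intros a b Ha Hb E.
      apply (mod_inj_range r); auto. apply (word_eval_mod_inj r l); [lia | exact E].
Qed.

Lemma affinv_le_expressible r w k : expressible r w k -> affinv r w <= Z.of_nat k.
Proof.
  intros [a [l [_ [<- Hw]]]].
  rewrite (affinv_translate r (word_eval r l) w a Hw). apply affinv_word.
Qed.

Lemma aff_length_unique r w a b : aff_length r w a -> aff_length r w b -> a = b.
Proof. intros [Ha Hmin] [Hb Hmin']. specialize (Hmin b Hb). specialize (Hmin' a Ha). lia. Qed.

Definition inverted (w : Z -> Z) (p : Z * Z) : bool := w (snd p) <? w (fst p).

Definition ninv (r : Z) (w : Z -> Z) : nat := length (filter (inverted w) (pairs r)).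

Lemma affinv_ninv r w : (forall j, 1 <= j <= r -> 1 <= w j <= r) -> affinv r w = Z.of_nat (ninv r w).
Proof.
  intros Hrange. unfold ninv. rewrite <- sumZ_indicator. apply sumZ_map_ext.
  intros [a b] Hab. apply in_pairs in Hab. unfold winding, inverted. simpl.
  pose proof (Hrange a ltac:(lia)). pose proof (Hrange b ltac:(lia)).
  rewrite small_quotient by lia.
  case_Z_tests; lia.
Qed.

Lemma ninv_id r : ninv r (fun x => x) = 0%nat.
Proof. pose proof (affinv_ninv r (fun x => x) (fun j Hj => Hj)) as H. rewrite affinv_id in H. lia. Qed.

Lemma ninv_pos r w : (0 < ninv r w)%nat -> exists a b, 1 <= a /\ a < b <= r /\ w b < w a.
Proof.
  unfold ninv. destruct (filter (inverted w) (pairs r)) as [|[a b] ps] eqn:E; [simpl; lia|].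
  intros _. assert (Hab : In (a, b) (filter (inverted w) (pairs r))) by (rewrite E; now left).
  apply filter_In in Hab as [Hab Hinv]. apply in_pairs in Hab. apply Z.ltb_lt in Hinv.
  exists a, b. cbn in Hinv. lia.
Qed.

Lemma ninv_zero r w : ninv r w = 0%nat -> forall a b, 1 <= a -> a < b <= r -> w a <= w b.
Proof.
  intros H0 a b Ha Hb. apply length_zero_iff_nil in H0.
  destruct (Z.ltb_spec (w b) (w a)) as [Hinv|]; [exfalso|lia].
  assert (Hin : In (a, b) (filter (inverted w) (pairs r)))
    by (apply filter_In; split; [apply in_pairs; lia | now apply Z.ltb_lt]).
  now rewrite H0 in Hin.
Qed.

Lemma ninv_s_gen r v w p q : 2 <= r -> 1 <= v < r ->
  (forall j, 1 <= j <= r -> 1 <= w j <= r) ->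
  (forall a b, 1 <= a <= r -> 1 <= b <= r -> w a = w b -> a = b) ->
  1 <= p <= r -> 1 <= q <= r -> w p = v -> w q = v + 1 ->
  Z.of_nat (ninv r (fun x => s_gen r v (w x))) = Z.of_nat (ninv r w) + (if p <? q then 1 else -1).
Proof.
  intros Hr Hv Hrange Hinj Hp Hq Hwp Hwq.
  assert (Hpq : p <> q) by (intros ->; lia).
  unfold ninv. rewrite <- !sumZ_indicator.
  (* The pair {p, q} = w^-1 {v, v + 1} is the only one whose status changes. *)
  rewrite (sumZ_map_update _ (fun x => if inverted w x then 1 else 0) _ (Z.min p q, Z.max p q)).
  - unfold inverted. simpl.
    destruct (Z.ltb_spec p q); [rewrite Z.min_l, Z.max_r by lia | rewrite Z.min_r, Z.max_l by lia];
      rewrite Hwp, Hwq, !s_gen_on_range by lia; case_Z_tests; lia.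
  - apply NoDup_pairs.
  - apply in_pairs. lia.
  - intros [a b] Hab Hne. apply in_pairs in Hab. unfold inverted. simpl.
    rewrite s_gen_ltb; [reflexivity|lia|lia|apply Hrange; lia|apply Hrange; lia| |].
    + intros [Ha Hb]. rewrite <- Hwp in Ha. rewrite <- Hwq in Hb.
      apply Hinj in Ha; [|lia|lia]. apply Hinj in Hb; [|lia|lia].
      subst. apply Hne. f_equal; lia.
    + intros [Ha Hb]. rewrite <- Hwq in Ha. rewrite <- Hwp in Hb.
      apply Hinj in Ha; [|lia|lia]. apply Hinj in Hb; [|lia|lia].
      subst. apply Hne. f_equal; lia.
Qed.

Lemma adjacent_descent (h : Z -> Z) c (k : nat) : h (c + Z.of_nat k) < h c ->
  exists v, c <= v < c + Z.of_nat k /\ h (v + 1) < h v.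
Proof.
  revert c. induction k as [|k IH]; intros c H; [rewrite Z.add_0_r in H; lia|].
  destruct (Z_lt_le_dec (h (c + 1)) (h c)) as [Hlt|Hle]; [exists c; lia|].
  destruct (IH (c + 1)) as [v Hv]; [replace (c + 1 + Z.of_nat k) with (c + Z.of_nat (S k)) by lia; lia|].
  exists v. lia.
Qed.

Lemma increasing_range_id r (f : Z -> Z) :
  (forall j, 1 <= j <= r -> 1 <= f j <= r) -> (forall a b, 1 <= a -> a < b <= r -> f a < f b) ->
  forall j, 1 <= j <= r -> f j = j.
Proof.
  intros Hrange Hinc.
  assert (Hlow : forall k : nat, 1 + Z.of_nat k <= r -> 1 + Z.of_nat k <= f (1 + Z.of_nat k)).
  { induction k as [|k IH]; intros Hk; [simpl; specialize (Hrange 1); lia|].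
    specialize (Hinc (1 + Z.of_nat k) (1 + Z.of_nat (S k))). specialize (IH ltac:(lia)). lia. }
  assert (Hup : forall k : nat, 1 <= r - Z.of_nat k -> f (r - Z.of_nat k) <= r - Z.of_nat k).
  { induction k as [|k IH]; intros Hk; [rewrite Z.sub_0_r; specialize (Hrange r); lia|].
    specialize (Hinc (r - Z.of_nat (S k)) (r - Z.of_nat k)). specialize (IH ltac:(lia)). lia. }
  intros j Hj. specialize (Hlow (Z.to_nat (j - 1))). specialize (Hup (Z.to_nat (r - j))).
  rewrite Z2Nat.id in Hlow, Hup by lia.
  replace (1 + (j - 1)) with j in Hlow by lia. replace (r - (r - j)) with j in Hup by lia. lia.
Qed.

(** * The blocks of lambda *)

Lemma psum_succ lam i : 0 <= i -> psum lam (i + 1) = psum lam i + Z.of_nat (lam (i + 1)).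
Proof.
  intros Hi. unfold psum. rewrite Z2Nat.inj_add, Nat.add_1_r, seq_S, map_app, fold_right_app by lia.
  cbn [map fold_right]. replace (Z.of_nat (1 + Z.to_nat i)) with (i + 1) by lia.
  generalize (map (fun t => Z.of_nat (lam (Z.of_nat t))) (seq 1 (Z.to_nat i))).
  induction l as [|a l IH]; simpl; lia.
Qed.

Lemma psum_mono lam i j : 0 <= i <= j -> psum lam i <= psum lam j.
Proof.
  intros Hij. replace j with (i + Z.of_nat (Z.to_nat (j - i))) by lia.
  induction (Z.to_nat (j - i)) as [|k IH]; [rewrite Z.add_0_r; lia|].
  replace (i + Z.of_nat (S k)) with (i + Z.of_nat k + 1) by lia.
  rewrite psum_succ by lia. lia.
Qed.

Definition in_block (lam : Z -> nat) (i x : Z) : Prop := psum lam (i - 1) < x <= psum lam i.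

Lemma index_decomp_unique n i i' k k' : 1 <= i <= n -> 1 <= i' <= n ->
  i + k * n = i' + k' * n -> i = i' /\ k = k'.
Proof.
  intros Hi Hi' E. assert (k = k') by (destruct (Z.lt_total k k') as [|[|]]; auto; nia).
  subst. lia.
Qed.

Lemma in_R_iff n r lam m x : in_R n r lam m x <->
  exists k i, 1 <= i <= n /\ m = i + k * n /\ in_block lam i (x - k * r).
Proof.
  unfold in_R, lam_ki, in_block.
  split; intros [k [i [Hi [Hm Hx]]]]; exists k, i; split; auto; split; auto;
    pose proof (psum_succ lam (i - 1) ltac:(lia)); replace (i - 1 + 1) with i in * by lia; lia.
Qed.

Lemma in_R_base n r lam m x : 1 <= m <= n -> (in_R n r lam m x <-> in_block lam m x).
Proof.
  intros Hm. rewrite in_R_iff. split.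
  - intros [k [i [Hi [E Hx]]]].
    destruct (index_decomp_unique n i m k 0) as [-> ->]; auto; [lia|].
    now replace (x - 0 * r) with x in Hx by lia.
  - intros Hx. exists 0, m. split; [auto|split; [lia|]]. now replace (x - 0 * r) with x by lia.
Qed.

Lemma in_R_shift n r lam m x q : in_R n r lam m x -> in_R n r lam (m + q * n) (x + q * r).
Proof.
  rewrite !in_R_iff. intros [k [i [Hi [Hm Hx]]]]. exists (k + q), i.
  split; [auto|split; [lia|]]. now replace (x + q * r - (k + q) * r) with (x - k * r) by ring.
Qed.

Lemma in_block_range n r lam i x : psum lam n = r -> 1 <= i <= n -> in_block lam i x -> 1 <= x <= r.
Proof.
  unfold in_block. intros Hn Hi Hx.
  pose proof (psum_mono lam 0 (i - 1) ltac:(lia)). pose proof (psum_mono lam i n ltac:(lia)).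
  change (psum lam 0) with 0 in *. lia.
Qed.

Lemma in_block_lt lam i j x y : 1 <= i < j -> in_block lam i x -> in_block lam j y -> x < y.
Proof. unfold in_block. intros Hij Hx Hy. pose proof (psum_mono lam i (j - 1) ltac:(lia)). lia. Qed.

Lemma in_block_unique lam i j x : 1 <= i -> 1 <= j -> in_block lam i x -> in_block lam j x -> i = j.
Proof.
  intros Hi Hj Hx Hx'. destruct (Z.lt_total i j) as [H|[H|H]]; auto.
  - pose proof (in_block_lt lam i j x x ltac:(lia) Hx Hx'). lia.
  - pose proof (in_block_lt lam j i x x ltac:(lia) Hx' Hx). lia.
Qed.

Lemma in_block_exists n r lam x : 0 <= n -> psum lam n = r -> 1 <= x <= r ->
  exists i, 1 <= i <= n /\ in_block lam i x.
Proof.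
  intros Hn Hr Hx.
  assert (H : forall k : nat, x <= psum lam (Z.of_nat k) ->
            exists i, 1 <= i <= Z.of_nat k /\ in_block lam i x).
  { induction k as [|k IH]; intros Hk; [change (psum lam (Z.of_nat 0)) with 0 in Hk; exfalso; lia|].
    destruct (Z_le_gt_dec x (psum lam (Z.of_nat k))) as [Hle|Hgt].
    - destruct (IH Hle) as [i [Hi Hxi]]. exists i. split; auto. lia.
    - exists (Z.of_nat (S k)). split; [lia|]. unfold in_block.
      replace (Z.of_nat (S k) - 1) with (Z.of_nat k) by lia. lia. }
  destruct (H (Z.to_nat n)) as [i [Hi Hxi]]; [rewrite Z2Nat.id; lia|].
  exists i. split; auto. lia.
Qed.

Definition same_block (n : Z) (lam : Z -> nat) (p : Z * Z) : bool :=
  existsb (fun i => (psum lam (i - 1) <? fst p) && (fst p <=? psum lam i) &&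
                    (psum lam (i - 1) <? snd p) && (snd p <=? psum lam i))%bool
          (zseq (Z.to_nat n) 1).

Lemma same_block_spec n lam x y : same_block n lam (x, y) = true <->
  exists i, 1 <= i <= n /\ in_block lam i x /\ in_block lam i y.
Proof.
  unfold same_block, in_block. rewrite existsb_exists.
  split; intros [i [Hi H]]; exists i;
    cbn [fst snd] in *; rewrite in_zseq, ?Bool.andb_true_iff, ?Z.ltb_lt, ?Z.leb_le in *; lia.
Qed.

Definition block_pairs (n r : Z) (lam : Z -> nat) : list (Z * Z) :=
  filter (same_block n lam) (pairs r).

Lemma uninverted_block_pair n r lam w : (ninv r w < length (block_pairs n r lam))%nat ->
  exists a b, 1 <= a /\ a < b <= r /\ same_block n lam (a, b) = true /\ w a <= w b.
Proof.
  intros Hlt. destruct (existsb (fun p => negb (inverted w p)) (block_pairs n r lam)) eqn:E.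
  - apply existsb_exists in E as [[a b] [Hin Hinv]].
    apply filter_In in Hin as [Hab Hs]. apply in_pairs in Hab.
    apply Bool.negb_true_iff, Z.ltb_ge in Hinv. cbn in Hinv.
    exists a, b. repeat split; auto; lia.
  - exfalso. enough (length (block_pairs n r lam) <= ninv r w)%nat by lia.
    apply length_filter_mono. intros p Hp Hs. destruct (inverted w p) eqn:Ei; auto.
    assert (Hex : existsb (fun p => negb (inverted w p)) (block_pairs n r lam) = true)
      by (apply existsb_exists; exists p; split; [apply filter_In; auto | now rewrite Ei]).
    congruence.
Qed.

(** * The Young subgroup *)

Record young (n r : Z) (lam : Z -> nat) (w g : Z -> Z) : Prop := {
  young_retract : forall x, g (w x) = x;
  young_section : forall x, w (g x) = x;
  young_periodic : forall x, w (x + r) = w x + r;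
  young_range : forall j, 1 <= j <= r -> 1 <= w j <= r;
  young_blocks : forall i x, 1 <= i <= n -> in_block lam i x -> in_block lam i (w x) }.

Arguments young_retract {n r lam w g}.
Arguments young_section {n r lam w g}.
Arguments young_periodic {n r lam w g}.
Arguments young_range {n r lam w g}.
Arguments young_blocks {n r lam w g}.

Lemma young_of_in_young n r lam w : in_young n r lam w -> exists g, young n r lam w g.
Proof.
  intros [[[g [Hgw Hwg]] Hper] [Hrange Hblocks]]. exists g. split; auto.
  intros i x Hi Hx. apply (in_R_base n r lam); auto. apply Hblocks; auto. now apply in_R_base.
Qed.

Lemma in_young_of_young n r lam w g : young n r lam w g -> in_young n r lam w.
Proof.
  intros [Hgw Hwg Hper Hrange Hblocks]. split; [split; eauto|split; auto].
  intros i x Hi Hx. apply in_R_base; auto. apply Hblocks; auto. now apply (in_R_base n r lam).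
Qed.

Lemma young_injective n r lam w g a b : young n r lam w g -> w a = w b -> a = b.
Proof. intros Y E. now rewrite <- (young_retract Y a), E, (young_retract Y b). Qed.

Lemma young_id n r lam : young n r lam (fun x => x) (fun x => x).
Proof. split; auto. Qed.

Lemma young_inverse_range n r lam w g : 1 <= r -> young n r lam w g ->
  forall v, 1 <= v <= r -> 1 <= g v <= r.
Proof.
  intros Hr Y v Hv.
  destruct (reduce_range r (g v) ltac:(lia)) as [E Hj].
  set (j := (g v - 1) mod r + 1) in *. set (q := (g v - 1) / r) in *.
  assert (Hw : v = w j + q * r).
  { rewrite <- (young_section Y v), E. apply shift_equivariant, (young_periodic Y). }
  pose proof (young_range Y j Hj). assert (q = 0) by nia. lia.
Qed.

Lemma young_s_gen n r lam w g i v : psum lam n = r -> young n r lam w g ->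
  1 <= i <= n -> in_block lam i v -> in_block lam i (v + 1) ->
  young n r lam (fun x => s_gen r v (w x)) (fun x => g (s_gen r v x)).
Proof.
  intros Hn Y Hi Hv Hv1.
  pose proof (in_block_range n r lam i v Hn Hi Hv).
  pose proof (in_block_range n r lam i (v + 1) Hn Hi Hv1).
  destruct Y as [Hgw Hwg Hper Hrange Hblocks]. split.
  - intros x. now rewrite s_gen_involutive by lia.
  - intros x. rewrite Hwg. apply s_gen_involutive. lia.
  - intros x. rewrite Hper. replace (w x + r) with (w x + 1 * r) by ring.
    rewrite s_gen_add_mul by lia. ring.
  - intros j Hj. specialize (Hrange j Hj). rewrite s_gen_on_range by lia.
    destruct (Z.eqb_spec (w j) v); [lia|]. destruct (Z.eqb_spec (w j) (v + 1)); lia.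
  - intros i' x Hi' Hx. specialize (Hblocks i' x Hi' Hx).
    pose proof (in_block_range n r lam i' (w x) Hn Hi' Hblocks).
    rewrite s_gen_on_range by lia.
    destruct (Z.eqb_spec (w x) v) as [E|E]; [|destruct (Z.eqb_spec (w x) (v + 1)) as [E'|E']]; auto.
    + rewrite E in Hblocks. now rewrite (in_block_unique lam i' i v) by (auto; lia).
    + rewrite E' in Hblocks. now rewrite (in_block_unique lam i' i (v + 1)) by (auto; lia).
Qed.

Lemma young_step n r lam w g i v : psum lam n = r -> young n r lam w g ->
  1 <= i <= n -> in_block lam i v -> in_block lam i (v + 1) ->
  young n r lam (fun x => s_gen r v (w x)) (fun x => g (s_gen r v x)) /\
  Z.of_nat (ninv r (fun x => s_gen r v (w x))) =
    Z.of_nat (ninv r w) + (if g v <? g (v + 1) then 1 else -1).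
Proof.
  intros Hn Y Hi Hv Hv1. split; [now apply (young_s_gen n r lam w g i v)|].
  pose proof (in_block_range n r lam i v Hn Hi Hv).
  pose proof (in_block_range n r lam i (v + 1) Hn Hi Hv1).
  apply ninv_s_gen; try lia.
  - apply (young_range Y).
  - intros a b _ _. now apply (young_injective n r lam w g).
  - apply (young_inverse_range n r lam w g); auto; lia.
  - apply (young_inverse_range n r lam w g); auto; lia.
  - apply (young_section Y).
  - apply (young_section Y).
Qed.

Lemma inverted_same_block n r lam w g a b : 0 <= n -> psum lam n = r -> young n r lam w g ->
  1 <= a -> a < b <= r -> w b < w a -> same_block n lam (a, b) = true.
Proof.
  intros Hn0 Hn Y Ha Hb Hw. apply same_block_spec.
  destruct (in_block_exists n r lam a Hn0 Hn ltac:(lia)) as [i [Hi Ba]].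
  destruct (in_block_exists n r lam b Hn0 Hn ltac:(lia)) as [j [Hj Bb]].
  destruct (Z.lt_total i j) as [Hij|[<-|Hji]].
  - pose proof (in_block_lt lam i j (w a) (w b) ltac:(lia)
                  (young_blocks Y i a Hi Ba) (young_blocks Y j b Hj Bb)). lia.
  - now exists i.
  - pose proof (in_block_lt lam j i b a ltac:(lia) Bb Ba). lia.
Qed.

Lemma ninv_le_block_pairs n r lam w g : 0 <= n -> psum lam n = r -> young n r lam w g ->
  (ninv r w <= length (block_pairs n r lam))%nat.
Proof.
  intros Hn0 Hn Y. apply length_filter_mono. intros [a b] Hab Hinv.
  apply in_pairs in Hab. apply Z.ltb_lt in Hinv.
  apply (inverted_same_block n r lam w g); auto; lia.
Qed.

Lemma young_adjacent_in_block n r lam w g i a b : young n r lam w g -> 1 <= i <= n ->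
  in_block lam i a -> in_block lam i b -> w a < w b ->
  exists v, in_block lam i v /\ in_block lam i (v + 1) /\ (g v < g (v + 1) <-> a < b).
Proof.
  intros Y Hi Ha Hb Hab.
  pose proof (young_blocks Y i a Hi Ha) as Hwa. pose proof (young_blocks Y i b Hi Hb) as Hwb.
  assert (Hbetween : forall v, w a <= v <= w b -> in_block lam i v) by (unfold in_block in *; lia).
  assert (Hend : w a + Z.of_nat (Z.to_nat (w b - w a)) = w b) by lia.
  assert (Hba : a <> b) by (intros ->; lia).
  destruct (Z.lt_total b a) as [Hlt|[Heq|Hgt]]; [|congruence|].
  - destruct (adjacent_descent g (w a) (Z.to_nat (w b - w a))) as [v Hv].
    { rewrite Hend, !(young_retract Y). lia. }
    exists v. rewrite Hend in Hv. split; [|split]; [apply Hbetween; lia..|lia].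
  - destruct (adjacent_descent (fun x => - g x) (w a) (Z.to_nat (w b - w a))) as [v Hv].
    { rewrite Hend, !(young_retract Y). lia. }
    exists v. rewrite Hend in Hv. split; [|split]; [apply Hbetween; lia..|lia].
Qed.

Lemma young_ninv_zero n r lam w g : 1 <= r -> young n r lam w g -> ninv r w = 0%nat ->
  forall x, w x = x.
Proof.
  intros Hr Y H0.
  assert (Hinc : forall a b, 1 <= a -> a < b <= r -> w a < w b).
  { intros a b Ha Hb. pose proof (ninv_zero r w H0 a b Ha Hb).
    enough (w a <> w b) by lia. intros E. apply (young_injective n r lam w g) in E; auto. lia. }
  intros x. destruct (reduce_range r x ltac:(lia)) as [E Hj].
  rewrite E, (shift_equivariant r w (young_periodic Y)).
  now rewrite (increasing_range_id r w (young_range Y) Hinc).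
Qed.

Lemma young_word n r lam : 0 <= n -> 1 <= r -> psum lam n = r ->
  forall (m : nat) w g, young n r lam w g -> ninv r w = m ->
  exists l, Forall (fun i => 1 <= i <= r) l /\ length l = m /\ forall j, w j = word_eval r l j.
Proof.
  intros Hn0 Hr Hn. induction m as [|m IH]; intros w g Y Hm.
  - exists []. split; [constructor|split; [reflexivity|]].
    intros j. now apply (young_ninv_zero n r lam w g).
  - destruct (ninv_pos r w ltac:(lia)) as [a [b [Ha [Hab Hinv]]]].
    pose proof (inverted_same_block n r lam w g a b Hn0 Hn Y ltac:(lia) ltac:(lia) Hinv) as Hs.
    apply same_block_spec in Hs as [i [Hi [Ba Bb]]].
    destruct (young_adjacent_in_block n r lam w g i b a Y Hi Bb Ba Hinv) as [v [Bv [Bv1 Hsign]]].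
    destruct (young_step n r lam w g i v Hn Y Hi Bv Bv1) as [Y' Hcount].
    destruct (Z.ltb_spec (g v) (g (v + 1))) as [Hlt|_]; [apply Hsign in Hlt; lia|].
    destruct (IH _ _ Y' ltac:(lia)) as [l [Hl [Hlen Hw]]].
    pose proof (in_block_range n r lam i (v + 1) Hn Hi Bv1).
    pose proof (in_block_range n r lam i v Hn Hi Bv).
    exists (v :: l). split; [constructor; auto; lia|split; [simpl; auto|]].
    intros j. simpl. rewrite <- Hw, s_gen_involutive by lia. reflexivity.
Qed.

Lemma young_longest_exists n r lam : 0 <= n -> psum lam n = r ->
  exists w g, young n r lam w g /\ ninv r w = length (block_pairs n r lam).
Proof.
  intros Hn0 Hn. set (N := length (block_pairs n r lam)).
  enough (H : forall (m : nat) w g, young n r lam w g -> (ninv r w + m)%nat = N ->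
                exists w' g', young n r lam w' g' /\ ninv r w' = N).
  { apply (H N _ _ (young_id n r lam)). now rewrite ninv_id. }
  induction m as [|m IH]; intros w g Y Hm; [exists w, g; split; auto; lia|].
  destruct (uninverted_block_pair n r lam w ltac:(lia)) as [a [b [Ha [Hab [Hs Hle]]]]].
  apply same_block_spec in Hs as [i [Hi [Ba Bb]]].
  assert (Hwab : w a < w b).
  { enough (w a <> w b) by lia. intros Ew. apply (young_injective n r lam w g) in Ew; auto. lia. }
  destruct (young_adjacent_in_block n r lam w g i a b Y Hi Ba Bb Hwab) as [v [Bv [Bv1 Hsign]]].
  destruct (young_step n r lam w g i v Hn Y Hi Bv Bv1) as [Y' Hcount].
  destruct (Z.ltb_spec (g v) (g (v + 1))) as [_|Hge]; [|pose proof (proj2 Hsign ltac:(lia)); lia].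
  apply (IH _ _ Y'). lia.
Qed.

Lemma young_aff_length n r lam w g : 0 <= n -> 1 <= r -> psum lam n = r -> young n r lam w g ->
  aff_length r w (ninv r w).
Proof.
  intros Hn0 Hr Hn Y. split.
  - destruct (young_word n r lam Hn0 Hr Hn (ninv r w) w g Y eq_refl) as [l [Hl [Hlen Hw]]].
    exists 0, l. repeat split; auto. intros j. rewrite Hw. lia.
  - intros k Hk. apply affinv_le_expressible in Hk.
    rewrite affinv_ninv in Hk by apply (young_range Y). lia.
Qed.

Lemma in_young_length_le n r lam w a : 0 <= n -> 1 <= r -> psum lam n = r ->
  in_young n r lam w -> aff_length r w a -> (a <= length (block_pairs n r lam))%nat.
Proof.
  intros Hn0 Hr Hn Hw Ha. destruct (young_of_in_young n r lam w Hw) as [g Y].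
  rewrite (aff_length_unique r w a _ Ha (young_aff_length n r lam w g Hn0 Hr Hn Y)).
  now apply (ninv_le_block_pairs n r lam w g).
Qed.

(** * Counting Y and Z *)

Lemma card_Zset n r lam : 0 <= n -> psum lam n = r ->
  has_card (Zset n r lam) (length (block_pairs n r lam)).
Proof.
  intros Hn0 Hn. exists (block_pairs n r lam).
  split; [apply NoDup_filter, NoDup_pairs|split; [reflexivity|]].
  intros [s t]. unfold block_pairs, Zset. rewrite filter_In, in_pairs, same_block_spec.
  split.
  - intros [Hst [m [Hm [Hs Ht]]]]. split; [lia|split; [lia|]].
    exists m. now rewrite !in_R_base.
  - intros [Hs [Hst [m [Hm [Bs Bt]]]]]. rewrite in_R_base in Bs, Bt by auto.
    pose proof (in_block_range n r lam m t Hn Hm Bt). split; [lia|]. now exists m.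
Qed.

Lemma card_Yset n r lam d k : 1 <= r -> psum lam n = r -> is_affine_perm r d ->
  has_card (Zset n r lam) k -> has_card (Yset n r lam d) k.
Proof.
  intros Hr Hn [[g [Hgd Hdg]] Hd] HZ.
  pose proof (shift_equivariant r d Hd) as Hdq.
  set (c := fun x => (g x - 1) / r).
  apply (has_card_map _ _ (fun p => (fst p - c (fst p) * r, snd p - c (fst p) * r)) _ HZ).
  - intros [a b] [a' b'] [Ha _] [Ha' _] E. simpl in E. injection E as Ea Eb.
    assert (a = a').
    { apply (mod_inj_range r); auto.
      replace a with (a' + (c a - c a') * r) by lia. now rewrite Z.mod_add by lia. }
    subst a'. f_equal. lia.
  - intros [s t]. unfold Yset, Zset. split.
    + intros [[j [Hj <-]] [Hst [m [Hs Ht]]]].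
      apply in_R_iff in Hs as Hs'. destruct Hs' as [q [i [Hi [Hm Bs]]]].
      assert (Hc : c (d j - q * r) = - q).
      { unfold c. replace (d j - q * r) with (d j + - q * r) by ring.
        rewrite <- Hdq, Hgd. replace (j + - q * r - 1) with ((j - 1) + - q * r) by ring.
        rewrite Z.div_add, Z.div_small by lia. lia. }
      exists (d j - q * r, t - q * r). simpl. rewrite Hc. split; [|f_equal; ring].
      pose proof (in_block_range n r lam i _ Hn Hi Bs).
      split; [lia|split; [lia|exists i; split; [auto|]]].
      replace i with (m + - q * n) by lia.
      split; [replace (d j - q * r) with (d j + - q * r) by ring|
              replace (t - q * r) with (t + - q * r) by ring]; now apply in_R_shift.
    + intros [[a b] [[Ha [Hab [m [Hm [Ba Bb]]]]] E]]. simpl in E. injection E as <- <-.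
      destruct (reduce_range r (g a) ltac:(lia)) as [Eg Hj]. fold (c a) in Eg, Hj.
      split; [|split; [lia|]].
      * exists (g a - c a * r). split; [lia|].
        replace (g a - c a * r) with (g a + - c a * r) by ring. rewrite Hdq, Hdg. ring.
      * exists (m + - c a * n).
        split; [replace (a - c a * r) with (a + - c a * r) by ring|
                replace (b - c a * r) with (b + - c a * r) by ring]; now apply in_R_shift.
Qed.

Theorem lemma3p10p1 (n r : Z) (lam : Z -> nat) (d : Z -> Z) :
  1 <= n -> 1 <= r -> in_Lambda n r lam -> in_D n r lam d ->
  (exists w0 k, is_longest n r lam w0 /\ aff_length r w0 k) /\
  (forall w0 k, is_longest n r lam w0 -> aff_length r w0 k ->
     has_card (Yset n r lam d) k /\ has_card (Zset n r lam) k).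
Proof.
  intros Hn Hr [_ Hsum] [Hd _].
  set (N := length (block_pairs n r lam)).
  pose proof (in_young_length_le n r lam) as Hbound.
  destruct (young_longest_exists n r lam ltac:(lia) Hsum) as [ws [gs [Ys Hws]]].
  pose proof (young_aff_length n r lam ws gs ltac:(lia) Hr Hsum Ys) as Hlen.
  rewrite Hws in Hlen. pose proof (in_young_of_young n r lam ws gs Ys) as Hws_young.
  split.
  - exists ws, N. split; [split|]; auto.
    intros w a b Hw Ha Hb. rewrite (aff_length_unique r ws b N Hb Hlen). apply (Hbound w); auto; lia.
  - intros w0 k [Hw0 Hlongest] Hk.
    assert (k = N) as ->.
    { apply Nat.le_antisymm; [apply (Hbound w0); auto; lia | exact (Hlongest ws N k Hws_young Hlen Hk)]. }
    pose proof (card_Zset n r lam ltac:(lia) Hsum) as HZ.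
    split; [apply card_Yset|]; auto.
Qed.
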